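(* Let $X$ be a connected, locally path connected space, $n\in\mathbb{N}$, and let $A_1,\dots,A_n\subseteq X$ be open subsets such that each closure $\overline{A_i}$ is path connected. Let $p:X\to X/(A_1,\dots,A_n)$ be the associated quotient map, and suppose $X/(A_1,\dots,A_n)$ is semi-locally simply connected. Then for every $a\in\bigcup_{i=1}^n A_i$, with $*=p(a)$, the homomorphism $p_*:\pi_1^{top}(X,a)\to\pi_1^{top}(X/(A_1,\dots,A_n),* )$ is surjective.
   Context: For subsets $A_1,\dots,A_n$ of a space $X$, $X/(A_1,\dots,A_n)$ denotes the quotient space of $X$ by the equivalence relation generated by identifying all points of $A_i$ with each other for each $i$, and $p$ is the quotient map. $\pi_1^{top}(X,x)$ is $\pi_1(X,x)$ with the quotient topology from the loop space $\Omega(X,x)$ with the compact-open topology. A space $Y$ is semi-locally simply connected if every $y\in Y$ has an open neighborhood $U$ such that every loop in $U$ based at $y$ is nullhomotopic in $Y$. *)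

From Stdlib Require Import Reals Relations.
Open Scope R_scope.

Definition IsTopology {X : Type} (O : (X -> Prop) -> Prop) : Prop :=
  O (fun _ => True) /\
  (forall U V, O U -> O V -> O (fun x => U x /\ V x)) /\
  (forall F : (X -> Prop) -> Prop, (forall U, F U -> O U) ->
      O (fun x => exists U, F U /\ U x)).

Definition I01 : Type := { t : R | 0 <= t <= 1 }.
Definition I0 : I01 := exist _ 0 (conj (Rle_refl 0) Rle_0_1).
Definition I1 : I01 := exist _ 1 (conj Rle_0_1 (Rle_refl 1)).

Definition open_I (U : I01 -> Prop) : Prop :=
  forall t, U t -> exists eps, eps > 0 /\
    forall s : I01, Rabs (proj1_sig s - proj1_sig t) < eps -> U s.

Definition open_II (U : I01 -> I01 -> Prop) : Prop :=
  forall s t, U s t -> exists eps, eps > 0 /\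
    forall s' t' : I01, Rabs (proj1_sig s' - proj1_sig s) < eps ->
       Rabs (proj1_sig t' - proj1_sig t) < eps -> U s' t'.

Section Top.
Context {X : Type} (O : (X -> Prop) -> Prop).

Definition continuous_from_I (f : I01 -> X) : Prop :=
  forall U, O U -> open_I (fun t => U (f t)).

Definition continuous_from_II (H : I01 -> I01 -> X) : Prop :=
  forall U, O U -> open_II (fun s t => U (H s t)).

Definition is_path (f : I01 -> X) (x y : X) : Prop :=
  continuous_from_I f /\ f I0 = x /\ f I1 = y.

Definition is_loop (f : I01 -> X) (x : X) : Prop := is_path f x x.

Definition loop_homotopic (x : X) (f g : I01 -> X) : Prop :=
  exists H : I01 -> I01 -> X, continuous_from_II H /\
    (forall t, H I0 t = f t) /\ (forall t, H I1 t = g t) /\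
    (forall s, H s I0 = x) /\ (forall s, H s I1 = x).

Definition path_connected_set (S : X -> Prop) : Prop :=
  forall x y, S x -> S y -> exists f, is_path f x y /\ forall t, S (f t).

Definition connected_space : Prop :=
  forall U V, O U -> O V -> (forall x, U x \/ V x) ->
    (forall x, U x -> V x -> False) ->
    (forall x, ~ U x) \/ (forall x, ~ V x).

Definition locally_path_connected : Prop :=
  forall x U, O U -> U x -> exists V, O V /\ V x /\
    (forall y, V y -> U y) /\ path_connected_set V.

Definition closure (A : X -> Prop) (x : X) : Prop :=
  forall U, O U -> U x -> exists y, U y /\ A y.

Definition semi_locally_simply_connected : Prop :=
  forall y, exists U, O U /\ U y /\
    forall f, is_loop f y -> (forall t, U (f t)) ->
      loop_homotopic y f (fun _ => y).

End Top.

Definition ident_rel {X : Type} (n : nat) (A : nat -> X -> Prop) : relation X :=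
  clos_refl_sym_trans X (fun x y => exists i, (i < n)%nat /\ A i x /\ A i y).

Definition is_quotient_by {X Y : Type} (OX : (X -> Prop) -> Prop)
    (OY : (Y -> Prop) -> Prop) (n : nat) (A : nat -> X -> Prop) (p : X -> Y) : Prop :=
  (forall y, exists x, p x = y) /\
  (forall x x', p x = p x' <-> ident_rel n A x x') /\
  (forall V : Y -> Prop, OY V <-> OX (fun x => V (p x))).

(** Lift a loop g at p(a) by continuous induction along [0,1]. Call b liftable
    when every point of X over g(b) is the end of a path from a whose image is
    homotopic to the restriction of g to [0,b]. Two points of one fibre of p
    are joined by a chain of paths in the closures of the A_i; every point of
    the image of such a chain lies in the closure of the base point, so the
    image is null-homotopic. Around a parameter t, g stays in p(V) for a
    path-connected V whose image lies in a neighbourhood of g(t) where loops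
    are null; paths in V therefore lift the pieces of g near t up to homotopy,
    and liftability spreads over a neighbourhood of t. *)

From Stdlib Require Import Reals Relations Lra Classical ProofIrrelevance.
From Stdlib Require Import FunctionalExtensionality PropExtensionality.
From Stdlib Require Import Relations.Operators_Properties.
Open Scope R_scope.

Notation ival := (@proj1_sig R (fun t => 0 <= t <= 1)).

Lemma clamp01_bounds r : 0 <= Rmax 0 (Rmin 1 r) <= 1.
Proof. unfold Rmax, Rmin; repeat destruct Rle_dec; lra. Qed.

Definition clampI (r : R) : I01 := exist _ (Rmax 0 (Rmin 1 r)) (clamp01_bounds r).

Lemma ival_bounds (t : I01) : 0 <= ival t <= 1.
Proof. destruct t; simpl; auto. Qed.

Lemma ival_inj (s t : I01) : ival s = ival t -> s = t.
Proof.
  destruct s as [s hs], t as [t ht]; simpl; intro; subst.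
  f_equal; apply proof_irrelevance.
Qed.

Lemma ival_I0 : ival I0 = 0. Proof. reflexivity. Qed.
Lemma ival_I1 : ival I1 = 1. Proof. reflexivity. Qed.

Lemma ival_clampI r : ival (clampI r) = Rmax 0 (Rmin 1 r).
Proof. reflexivity. Qed.

Lemma ival_clampI_id r : 0 <= r <= 1 -> ival (clampI r) = r.
Proof. intros; rewrite ival_clampI; unfold Rmax, Rmin; repeat destruct Rle_dec; lra. Qed.

Lemma ival_clampI_le0 r : r <= 0 -> ival (clampI r) = 0.
Proof. intros; rewrite ival_clampI; unfold Rmax, Rmin; repeat destruct Rle_dec; lra. Qed.

Lemma ival_clampI_ge1 r : 1 <= r -> ival (clampI r) = 1.
Proof. intros; rewrite ival_clampI; unfold Rmax, Rmin; repeat destruct Rle_dec; lra. Qed.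

Lemma clampI_ival t : clampI (ival t) = t.
Proof. apply ival_inj, ival_clampI_id, ival_bounds. Qed.

Lemma clampI_eq a b : a = b -> clampI a = clampI b.
Proof. intros ->; reflexivity. Qed.

Lemma clampI_of_eq a t : a = ival t -> clampI a = t.
Proof. intros ->; apply clampI_ival. Qed.

Lemma clampI0 : clampI 0 = I0.
Proof. apply clampI_of_eq; reflexivity. Qed.

Lemma clampI1 : clampI 1 = I1.
Proof. apply clampI_of_eq; reflexivity. Qed.

Lemma clampI_lipschitz a b : Rabs (ival (clampI a) - ival (clampI b)) <= Rabs (a - b).
Proof.
  rewrite !ival_clampI. unfold Rmax, Rmin, Rabs.
  repeat destruct Rle_dec; repeat destruct Rcase_abs; lra.
Qed.

(** * Lipschitz reparametrisations of the square *)

Definition lipschitz2 (psi : I01 -> I01 -> R) : Prop :=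
  exists K, 0 < K /\ forall s t s' t',
    Rabs (psi s' t' - psi s t) <= K * (Rabs (ival s' - ival s) + Rabs (ival t' - ival t)).

Lemma lipschitz2_const c : lipschitz2 (fun _ _ => c).
Proof.
  exists 1. split; [lra|]. intros. rewrite Rminus_diag, Rabs_R0.
  pose proof (Rabs_pos (ival s' - ival s)); pose proof (Rabs_pos (ival t' - ival t)); lra.
Qed.

Lemma lipschitz2_fst : lipschitz2 (fun s _ => ival s).
Proof. exists 1. split; [lra|]. intros. pose proof (Rabs_pos (ival t' - ival t)); lra. Qed.

Lemma lipschitz2_snd : lipschitz2 (fun _ t => ival t).
Proof. exists 1. split; [lra|]. intros. pose proof (Rabs_pos (ival s' - ival s)); lra. Qed.

Lemma lipschitz2_add f g :
  lipschitz2 f -> lipschitz2 g -> lipschitz2 (fun s t => f s t + g s t).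
Proof.
  intros [K1 [H1 F1]] [K2 [H2 F2]]. exists (K1 + K2). split; [lra|]. intros.
  specialize (F1 s t s' t'); specialize (F2 s t s' t').
  replace (f s' t' + g s' t' - (f s t + g s t))
    with ((f s' t' - f s t) + (g s' t' - g s t)) by ring.
  eapply Rle_trans; [apply Rabs_triang | nra].
Qed.

Lemma lipschitz2_scale c f : lipschitz2 f -> lipschitz2 (fun s t => c * f s t).
Proof.
  intros [K [H F]]. exists (K * (Rabs c + 1)). split; [pose proof (Rabs_pos c); nra|].
  intros. specialize (F s t s' t').
  replace (c * f s' t' - c * f s t) with (c * (f s' t' - f s t)) by ring.
  rewrite Rabs_mult. pose proof (Rabs_pos c). pose proof (Rabs_pos (f s' t' - f s t)).
  pose proof (Rabs_pos (ival s' - ival s)); pose proof (Rabs_pos (ival t' - ival t)). nra.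
Qed.

Lemma lipschitz2_ext f g : (forall s t, f s t = g s t) -> lipschitz2 f -> lipschitz2 g.
Proof. intros E [K [H F]]. exists K. split; auto. intros. rewrite <- !E. auto. Qed.

Lemma lipschitz2_sub f g :
  lipschitz2 f -> lipschitz2 g -> lipschitz2 (fun s t => f s t - g s t).
Proof.
  intros. apply (lipschitz2_ext (fun s t => f s t + (-1) * g s t)); [intros; ring|].
  apply lipschitz2_add; [|apply lipschitz2_scale]; auto.
Qed.

Lemma lipschitz2_clamp f : lipschitz2 f -> lipschitz2 (fun s t => ival (clampI (f s t))).
Proof.
  intros [K [H F]]. exists K. split; auto. intros.
  eapply Rle_trans; [apply clampI_lipschitz | auto].
Qed.

Lemma lipschitz2_mul f g : lipschitz2 f -> lipschitz2 g ->
  (forall s t, 0 <= f s t <= 1) -> (forall s t, 0 <= g s t <= 1) ->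
  lipschitz2 (fun s t => f s t * g s t).
Proof.
  intros [K1 [H1 F1]] [K2 [H2 F2]] B1 B2. exists (K1 + K2). split; [lra|]. intros.
  specialize (F1 s t s' t'); specialize (F2 s t s' t').
  replace (f s' t' * g s' t' - f s t * g s t)
    with (f s' t' * (g s' t' - g s t) + g s t * (f s' t' - f s t)) by ring.
  eapply Rle_trans; [apply Rabs_triang|]. rewrite !Rabs_mult.
  pose proof (B1 s' t'); pose proof (B2 s t).
  rewrite (Rabs_right (f s' t')), (Rabs_right (g s t)) by lra.
  pose proof (Rabs_pos (g s' t' - g s t)). pose proof (Rabs_pos (f s' t' - f s t)).
  pose proof (Rabs_pos (ival s' - ival s)); pose proof (Rabs_pos (ival t' - ival t)). nra.
Qed.

Lemma lipschitz2_flip : lipschitz2 (fun _ t => 1 - ival t).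
Proof. apply lipschitz2_sub; [apply lipschitz2_const | apply lipschitz2_snd]. Qed.

Lemma lipschitz2_affine u w : lipschitz2 (fun _ s => u + ival s * (w - u)).
Proof.
  apply (lipschitz2_ext (fun _ s => u + (w - u) * ival s)); [intros; ring|].
  apply lipschitz2_add; [apply lipschitz2_const | apply lipschitz2_scale, lipschitz2_snd].
Qed.

Lemma lipschitz_sum_lt K e a b :
  0 < K -> 0 < e -> a < e / (2 * K) -> b < e / (2 * K) -> K * (a + b) < e.
Proof.
  intros HK He Ha Hb. assert (E : K * (e / (2 * K)) = e / 2) by (field; lra).
  assert (K * a < e / 2) by (rewrite <- E; apply Rmult_lt_compat_l; auto).
  assert (K * b < e / 2) by (rewrite <- E; apply Rmult_lt_compat_l; auto).
  lra.
Qed.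

(** * Paths and homotopies *)

Section Paths.
Context {Z : Type} (O : (Z -> Prop) -> Prop).

Lemma continuous_II_reparam (H : I01 -> I01 -> Z) p1 p2 :
  continuous_from_II O H -> lipschitz2 p1 -> lipschitz2 p2 ->
  continuous_from_II O (fun s t => H (clampI (p1 s t)) (clampI (p2 s t))).
Proof.
  intros HH [K1 [K1p HK1]] [K2 [K2p HK2]] U HU s t Hst.
  destruct (HH U HU _ _ Hst) as [e [ep He]].
  exists (Rmin (e / (2 * K1)) (e / (2 * K2))). split.
  - apply Rmin_pos; apply Rdiv_lt_0_compat; lra.
  - intros s' t' Hs Ht.
    pose proof (Rmin_l (e / (2 * K1)) (e / (2 * K2))).
    pose proof (Rmin_r (e / (2 * K1)) (e / (2 * K2))).
    apply He; eapply Rle_lt_trans; try apply clampI_lipschitz; eapply Rle_lt_trans;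
      [apply HK1 | apply lipschitz_sum_lt; lra | apply HK2 | apply lipschitz_sum_lt; lra].
Qed.

Lemma continuous_II_of_I (f : I01 -> Z) :
  continuous_from_I O f -> continuous_from_II O (fun _ t => f t).
Proof. intros C U HU s t Ht. destruct (C U HU t Ht) as [e [ep He]]. exists e; split; auto. Qed.

Lemma continuous_I_of_II (f : I01 -> Z) :
  continuous_from_II O (fun _ t => f t) -> continuous_from_I O f.
Proof.
  intros C U HU t Ht. destruct (C U HU I0 t Ht) as [e [ep He]]. exists e; split; auto.
  intros s Hs. apply (He I0 s); auto. rewrite Rminus_diag, Rabs_R0; lra.
Qed.

Lemma continuous_II_swap (H : I01 -> I01 -> Z) :
  continuous_from_II O H -> continuous_from_II O (fun s t => H t s).
Proof. intros C U HU s t Ht. destruct (C U HU t s Ht) as [e [ep He]]. exists e; split; auto. Qed.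

Lemma continuous_I_reparam (f : I01 -> Z) (psi : I01 -> R) :
  continuous_from_I O f -> lipschitz2 (fun _ t => psi t) ->
  continuous_from_I O (fun t => f (clampI (psi t))).
Proof.
  intros C L. apply continuous_I_of_II.
  exact (continuous_II_reparam (fun _ t => f t) (fun _ _ => 0) (fun _ t => psi t)
           (continuous_II_of_I f C) (lipschitz2_const 0) L).
Qed.

Lemma is_path_const z : is_path O (fun _ => z) z z.
Proof. split; auto. intros U HU t Ht. exists 1. split; [lra|]. auto. Qed.

Definition paste_II (H1 H2 : I01 -> I01 -> Z) (s t : I01) : Z :=
  if Rle_dec (ival t) (1/2) then H1 s (clampI (2 * ival t)) else H2 s (clampI (2 * ival t - 1)).

Lemma continuous_paste_II H1 H2 : continuous_from_II O H1 -> continuous_from_II O H2 ->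
  (forall s, H1 s I1 = H2 s I0) -> continuous_from_II O (paste_II H1 H2).
Proof.
  intros C1 C2 E U HU s t Hst. unfold paste_II in *.
  destruct (Rtotal_order (ival t) (1/2)) as [Hlt|[Heq|Hgt]].
  - destruct (Rle_dec (ival t) (1/2)); [|lra].
    destruct (C1 U HU _ _ Hst) as [e [ep He]].
    exists (Rmin (e/2) (1/2 - ival t)). split; [apply Rmin_pos; lra|].
    intros s' t' Hs Ht.
    pose proof (Rmin_l (e/2) (1/2 - ival t)); pose proof (Rmin_r (e/2) (1/2 - ival t)).
    apply Rabs_def2 in Ht.
    destruct (Rle_dec (ival t') (1/2)); [|lra]. apply He; [lra|].
    eapply Rle_lt_trans; [apply clampI_lipschitz | apply Rabs_def1; lra].
  - destruct (Rle_dec (ival t) (1/2)); [|lra].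
    assert (Hmid : clampI (2 * ival t) = I1) by (apply clampI_of_eq; simpl; lra).
    rewrite Hmid in Hst. pose proof Hst as Hst2. rewrite E in Hst2.
    destruct (C1 U HU _ _ Hst) as [e1 [ep1 He1]].
    destruct (C2 U HU _ _ Hst2) as [e2 [ep2 He2]].
    pose proof (Rmin_l e1 e2); pose proof (Rmin_r e1 e2); pose proof (Rmin_pos e1 e2 ep1 ep2).
    exists (Rmin e1 e2 / 2). split; [lra|].
    intros s' t' Hs Ht. apply Rabs_def2 in Ht. apply Rabs_def2 in Hs.
    destruct (Rle_dec (ival t') (1/2)).
    + apply He1; [apply Rabs_def1; lra|].
      rewrite <- clampI1. eapply Rle_lt_trans; [apply clampI_lipschitz|].
      rewrite Rabs_minus_sym. apply Rabs_def1; lra.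
    + apply He2; [apply Rabs_def1; lra|].
      rewrite <- clampI0. eapply Rle_lt_trans; [apply clampI_lipschitz | apply Rabs_def1; lra].
  - destruct (Rle_dec (ival t) (1/2)); [lra|].
    destruct (C2 U HU _ _ Hst) as [e [ep He]].
    exists (Rmin (e/2) (ival t - 1/2)). split; [apply Rmin_pos; lra|].
    intros s' t' Hs Ht.
    pose proof (Rmin_l (e/2) (ival t - 1/2)); pose proof (Rmin_r (e/2) (ival t - 1/2)).
    apply Rabs_def2 in Ht.
    destruct (Rle_dec (ival t') (1/2)); [lra|]. apply He; [lra|].
    eapply Rle_lt_trans; [apply clampI_lipschitz | apply Rabs_def1; lra].
Qed.

Definition concat (al be : I01 -> Z) (t : I01) : Z :=
  if Rle_dec (ival t) (1/2) then al (clampI (2 * ival t)) else be (clampI (2 * ival t - 1)).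

Definition rev (al : I01 -> Z) (t : I01) : Z := al (clampI (1 - ival t)).

Lemma concat_I0 al be : concat al be I0 = al I0.
Proof. unfold concat. destruct Rle_dec; simpl in *; [|lra]. f_equal. apply clampI_of_eq; simpl; ring. Qed.

Lemma concat_I1 al be : concat al be I1 = be I1.
Proof. unfold concat. destruct Rle_dec; simpl in *; [lra|]. f_equal. apply clampI_of_eq; simpl; ring. Qed.

Lemma is_path_concat al be x y z :
  is_path O al x y -> is_path O be y z -> is_path O (concat al be) x z.
Proof.
  intros [C1 [E1 F1]] [C2 [E2 F2]]. split; [|split].
  - apply continuous_I_of_II.
    exact (continuous_paste_II _ _ (continuous_II_of_I al C1) (continuous_II_of_I be C2)
             (fun _ => eq_trans F1 (eq_sym E2))).
  - rewrite concat_I0; auto.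
  - rewrite concat_I1; auto.
Qed.

Lemma is_path_rev al x y : is_path O al x y -> is_path O (rev al) y x.
Proof.
  intros [C [E F]]. split; [|split].
  - exact (continuous_I_reparam al _ C lipschitz2_flip).
  - unfold rev. rewrite <- F. f_equal. apply clampI_of_eq; simpl; ring.
  - unfold rev. rewrite <- E. f_equal. apply clampI_of_eq; simpl; ring.
Qed.

Definition homotopic (x y : Z) (al be : I01 -> Z) : Prop :=
  exists H : I01 -> I01 -> Z, continuous_from_II O H /\
    (forall t, H I0 t = al t) /\ (forall t, H I1 t = be t) /\
    (forall s, H s I0 = x) /\ (forall s, H s I1 = y).

Lemma homotopic_ext x y al be al' be' : (forall t, al t = al' t) -> (forall t, be t = be' t) ->
  homotopic x y al be -> homotopic x y al' be'.
Proof.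
  intros E1 E2 [H [C [H0 [H1 [H2 H3]]]]]. exists H. repeat split; auto.
  - intros; rewrite H0; auto.
  - intros; rewrite H1; auto.
Qed.

Lemma homotopic_trans x y al be ga :
  homotopic x y al be -> homotopic x y be ga -> homotopic x y al ga.
Proof.
  intros [H [C [H0 [H1 [H2 H3]]]]] [K [D [K0 [K1 [K2 K3]]]]].
  exists (fun s t => paste_II (fun a b => H b a) (fun a b => K b a) t s). repeat split.
  - apply continuous_II_swap, continuous_paste_II; try apply continuous_II_swap; auto.
    intros; rewrite H1, K0; auto.
  - intros t. unfold paste_II. destruct Rle_dec; simpl in *; [|lra].
    rewrite <- H0. f_equal. apply clampI_of_eq; simpl; ring.
  - intros t. unfold paste_II. destruct Rle_dec; simpl in *; [lra|].
    rewrite <- K1. f_equal. apply clampI_of_eq; simpl; ring.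
  - intros s. unfold paste_II. destruct Rle_dec; auto.
  - intros s. unfold paste_II. destruct Rle_dec; auto.
Qed.

Lemma homotopic_concat x y z al al' be be' : homotopic x y al al' -> homotopic y z be be' ->
  homotopic x z (concat al be) (concat al' be').
Proof.
  intros [H [C [H0 [H1 [H2 H3]]]]] [K [D [K0 [K1 [K2 K3]]]]].
  exists (paste_II H K). repeat split.
  - apply continuous_paste_II; auto. intros; rewrite H3, K2; auto.
  - intros t. unfold paste_II, concat. destruct Rle_dec; auto.
  - intros t. unfold paste_II, concat. destruct Rle_dec; auto.
  - intros s. unfold paste_II. destruct Rle_dec; simpl in *; [|lra].
    rewrite <- (H2 s). f_equal. apply clampI_of_eq; simpl; ring.
  - intros s. unfold paste_II. destruct Rle_dec; simpl in *; [lra|].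
    rewrite <- (K3 s). f_equal. apply clampI_of_eq; simpl; ring.
Qed.

Definition specializes (a b : Z) : Prop := forall W, O W -> W a -> W b.

(** The homotopy jumps from [al] to [be] right after time 0; it is continuous because
    every neighbourhood of [al t] contains [be t]. *)
Lemma homotopic_of_specializes x y al be :
  continuous_from_I O al -> continuous_from_I O be -> (forall t, specializes (al t) (be t)) ->
  al I0 = x -> be I0 = x -> al I1 = y -> be I1 = y -> homotopic x y al be.
Proof.
  intros C1 C2 S A0 B0 A1 B1.
  exists (fun s t => if Rle_dec (ival s) 0 then al t else be t). repeat split.
  - intros U HU s t Hst. destruct (Rle_dec (ival s) 0).
    + destruct (C1 U HU t Hst) as [e1 [ep1 He1]].
      destruct (C2 U HU t (S t U HU Hst)) as [e2 [ep2 He2]].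
      exists (Rmin e1 e2). split; [apply Rmin_pos; lra|].
      intros s' t' Hs Ht. pose proof (Rmin_l e1 e2); pose proof (Rmin_r e1 e2).
      destruct (Rle_dec (ival s') 0); [apply He1 | apply He2]; lra.
    + destruct (C2 U HU t Hst) as [e2 [ep2 He2]].
      exists (Rmin e2 (ival s)). split; [apply Rmin_pos; lra|].
      intros s' t' Hs Ht. pose proof (Rmin_l e2 (ival s)); pose proof (Rmin_r e2 (ival s)).
      apply Rabs_def2 in Hs.
      destruct (Rle_dec (ival s') 0); [lra | apply He2; lra].
  - intros t. destruct Rle_dec; simpl in *; auto; lra.
  - intros t. destruct Rle_dec; simpl in *; auto; lra.
  - intros s. destruct Rle_dec; auto; congruence.
  - intros s. destruct Rle_dec; auto; congruence.
Qed.

Lemma homotopic_reparam (al : I01 -> Z) p1 p2 x y : continuous_from_I O al ->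
  lipschitz2 (fun _ t => p1 t) -> lipschitz2 (fun _ t => p2 t) -> p1 I0 = p2 I0 -> p1 I1 = p2 I1 ->
  al (clampI (p1 I0)) = x -> al (clampI (p1 I1)) = y ->
  homotopic x y (fun t => al (clampI (p1 t))) (fun t => al (clampI (p2 t))).
Proof.
  intros C L1 L2 E0 E1 X0 X1.
  set (mix s t := (1 - ival s) * ival (clampI (p1 t)) + ival s * ival (clampI (p2 t))).
  assert (L : lipschitz2 mix).
  { pose proof (ival_bounds (clampI (p1 I0))).
    apply lipschitz2_add; apply lipschitz2_mul; intros; try apply ival_bounds.
    - apply lipschitz2_sub; [apply lipschitz2_const | apply lipschitz2_fst].
    - apply (lipschitz2_clamp (fun _ t => p1 t)); auto.
    - pose proof (ival_bounds s); lra.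
    - apply lipschitz2_fst.
    - apply (lipschitz2_clamp (fun _ t => p2 t)); auto. }
  exists (fun s t => al (clampI (mix s t))). repeat split.
  - exact (continuous_II_reparam (fun _ t => al t) (fun _ _ => 0) _
             (continuous_II_of_I al C) (lipschitz2_const 0) L).
  - intros t. f_equal. rewrite <- clampI_ival. f_equal. unfold mix; simpl; ring.
  - intros t. f_equal. rewrite <- clampI_ival. f_equal. unfold mix; simpl; ring.
  - intros s. rewrite <- X0. f_equal. rewrite <- clampI_ival. f_equal. unfold mix. rewrite <- E0. ring.
  - intros s. rewrite <- X1. f_equal. rewrite <- clampI_ival. f_equal. unfold mix. rewrite <- E1. ring.
Qed.

Lemma concat_const_r al x y : is_path O al x y -> homotopic x y (concat al (fun _ => y)) al.
Proof.
  intros [C [E F]].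
  apply (homotopic_ext x y (fun t => al (clampI (ival (clampI (2 * ival t)))))
                           (fun t => al (clampI (ival t)))).
  - intros t. unfold concat. destruct Rle_dec; [rewrite clampI_ival; auto|].
    rewrite ival_clampI_ge1, clampI1 by lra; auto.
  - intros; rewrite clampI_ival; auto.
  - apply homotopic_reparam; auto.
    + apply (lipschitz2_clamp (fun _ t => 2 * ival t)), lipschitz2_scale, lipschitz2_snd.
    + apply lipschitz2_snd.
    + rewrite ival_I0, ival_clampI_id; lra.
    + rewrite ival_I1, ival_clampI_ge1; lra.
    + rewrite ival_I0, ival_clampI_id, <- E by lra. f_equal. apply clampI_of_eq; simpl; ring.
    + rewrite ival_I1, ival_clampI_ge1, clampI1 by lra; auto.
Qed.

(** [(square_s l, square_t l)] runs, as [l] goes from 0 to 1, along the three sides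
    [t = 0], [s = 1], [t = 1] of the unit square, from [(0,0)] to [(0,1)]. *)
Definition square_s (l : I01) : R := ival (clampI (3 * ival l)) - ival (clampI (3 * ival l - 2)).
Definition square_t (l : I01) : R := ival (clampI (3 * ival l - 1)).

Lemma square_s_bounds l : 0 <= square_s l <= 1.
Proof. unfold square_s. rewrite !ival_clampI. unfold Rmax, Rmin; repeat destruct Rle_dec; lra. Qed.

Lemma square_t_bounds l : 0 <= square_t l <= 1.
Proof. apply ival_bounds. Qed.

Lemma square_s_I0 : square_s I0 = 0.
Proof. unfold square_s. rewrite ival_I0, ival_clampI_id, ival_clampI_le0; lra. Qed.

Lemma square_t_I0 : square_t I0 = 0.
Proof. unfold square_t. rewrite ival_I0, ival_clampI_le0; lra. Qed.

Lemma square_s_I1 : square_s I1 = 0.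
Proof. unfold square_s. rewrite ival_I1, !ival_clampI_ge1; lra. Qed.

Lemma square_t_I1 : square_t I1 = 1.
Proof. unfold square_t. rewrite ival_I1, ival_clampI_ge1; lra. Qed.

Lemma square_boundary l : square_t l = 0 \/ square_s l = 1 \/ square_t l = 1.
Proof. unfold square_s, square_t. rewrite !ival_clampI. unfold Rmax, Rmin; repeat destruct Rle_dec; lra. Qed.

Lemma lipschitz2_square_s : lipschitz2 (fun l _ => square_s l).
Proof.
  apply (lipschitz2_sub (fun l _ => ival (clampI (3 * ival l)))
                        (fun l _ => ival (clampI (3 * ival l - 2)))).
  - apply (lipschitz2_clamp (fun l _ => 3 * ival l)), lipschitz2_scale, lipschitz2_fst.
  - apply (lipschitz2_clamp (fun l _ => 3 * ival l - 2)), lipschitz2_sub;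
      [apply lipschitz2_scale, lipschitz2_fst | apply lipschitz2_const].
Qed.

Lemma lipschitz2_square_t : lipschitz2 (fun l _ => square_t l).
Proof.
  apply (lipschitz2_clamp (fun l _ => 3 * ival l - 1)), lipschitz2_sub;
    [apply lipschitz2_scale, lipschitz2_fst | apply lipschitz2_const].
Qed.

(** [K] sampled along the three outer sides scaled by [r t] about [(0, 1/2)]. A
    null-homotopy of a loop is constant on those sides, so this turns a null-homotopy
    of [concat al (rev ga)] into a homotopy from [al] to [ga]. *)
Definition sweep (K : I01 -> I01 -> Z) (r : I01 -> R) (l t : I01) : Z :=
  K (clampI (r t * square_s l)) (clampI (1/2 + r t * square_t l - 1/2 * r t)).

Lemma continuous_sweep K r : continuous_from_II O K ->
  lipschitz2 (fun _ t => r t) -> (forall t, 0 <= r t <= 1) -> continuous_from_II O (sweep K r).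
Proof.
  intros C L B. apply continuous_II_reparam; auto.
  - apply (lipschitz2_mul (fun _ t => r t) (fun l _ => square_s l)); auto.
    + apply lipschitz2_square_s.
    + intros; apply square_s_bounds.
  - apply lipschitz2_sub; [apply lipschitz2_add | apply lipschitz2_scale; auto].
    + apply lipschitz2_const.
    + apply (lipschitz2_mul (fun _ t => r t) (fun l _ => square_t l)); auto.
      * apply lipschitz2_square_t.
      * intros; apply square_t_bounds.
Qed.

Lemma sweep_outer K r z l t :
  (forall s, K s I0 = z) -> (forall s, K I1 s = z) -> (forall s, K s I1 = z) ->
  r t = 1 -> sweep K r l t = z.
Proof.
  intros E0 E1 E2 R1. unfold sweep. rewrite R1.
  destruct (square_boundary l) as [H|[H|H]]; rewrite H.
  - replace (1/2 + 1 * 0 - 1/2 * 1) with 0 by ring. rewrite clampI0; auto.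
  - replace (1 * 1) with 1 by ring. rewrite clampI1; auto.
  - replace (1/2 + 1 * 1 - 1/2 * 1) with 1 by ring. rewrite clampI1; auto.
Qed.

Lemma sweep_I0 K r t : sweep K r I0 t = K I0 (clampI (1/2 - 1/2 * r t)).
Proof.
  unfold sweep. rewrite square_s_I0, square_t_I0, Rmult_0_r, clampI0.
  f_equal. apply clampI_eq; ring.
Qed.

Lemma sweep_I1 K r t : sweep K r I1 t = K I0 (clampI (1/2 + 1/2 * r t)).
Proof.
  unfold sweep. rewrite square_s_I1, square_t_I1, Rmult_0_r, clampI0.
  f_equal. apply clampI_eq; lra.
Qed.

Lemma sweep_center K r l t : r t = 0 -> sweep K r l t = K I0 (clampI (1/2)).
Proof.
  intros R0. unfold sweep. rewrite R0, Rmult_0_l, clampI0.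
  f_equal. apply clampI_eq; ring.
Qed.

Lemma homotopic_of_concat_rev_null x y al ga : is_path O al x y -> is_path O ga x y ->
  homotopic x x (concat al (rev ga)) (fun _ => x) -> homotopic x y al ga.
Proof.
  intros [Ca [Ea Fa]] [Cg [Eg Fg]] [K [C [K0 [K1 [K2 K3]]]]].
  exists (sweep K (fun t => 1 - ival t)). repeat split.
  - apply continuous_sweep; auto using lipschitz2_flip.
    intros t; pose proof (ival_bounds t); lra.
  - intros t. pose proof (ival_bounds t).
    rewrite sweep_I0, K0. unfold concat. rewrite ival_clampI_id by lra.
    destruct Rle_dec; [|lra]. f_equal. apply clampI_of_eq. lra.
  - intros t. pose proof (ival_bounds t).
    rewrite sweep_I1, K0. unfold concat. rewrite ival_clampI_id by lra.
    destruct Rle_dec.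
    + assert (T : t = I1) by (apply ival_inj; simpl; lra). subst t.
      rewrite Fg, <- Fa. f_equal. apply clampI_of_eq. simpl. lra.
    + unfold rev. f_equal. apply clampI_of_eq. rewrite ival_clampI_id by lra. lra.
  - intros s. apply sweep_outer; auto; simpl; lra.
  - intros s. rewrite sweep_center, K0 by (rewrite ival_I1; lra). unfold concat.
    rewrite ival_clampI_id by lra. destruct Rle_dec; [|lra].
    rewrite <- Fa. f_equal. apply clampI_of_eq. simpl; lra.
Qed.

Lemma homotopic_of_rev_concat_null x y al ga : is_path O al x y -> is_path O ga x y ->
  homotopic y y (concat (rev al) ga) (fun _ => y) -> homotopic x y al ga.
Proof.
  intros [Ca [Ea Fa]] [Cg [Eg Fg]] [K [C [K0 [K1 [K2 K3]]]]].
  exists (sweep K (fun t => ival t)). repeat split.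
  - apply continuous_sweep; auto using lipschitz2_snd, ival_bounds.
  - intros t. pose proof (ival_bounds t).
    rewrite sweep_I0, K0. unfold concat. rewrite ival_clampI_id by lra.
    destruct Rle_dec; [|lra]. unfold rev. f_equal. apply clampI_of_eq.
    rewrite ival_clampI_id by lra. lra.
  - intros t. pose proof (ival_bounds t).
    rewrite sweep_I1, K0. unfold concat. rewrite ival_clampI_id by lra.
    destruct Rle_dec.
    + assert (T : t = I0) by (apply ival_inj; simpl; lra). subst t.
      rewrite Eg, <- Ea. unfold rev. f_equal. apply clampI_of_eq.
      rewrite ival_clampI_id by lra. simpl. lra.
    + f_equal. apply clampI_of_eq. lra.
  - intros s. rewrite sweep_center, K0 by (rewrite ival_I0; lra). unfold concat.
    rewrite ival_clampI_id by lra. destruct Rle_dec; [|lra].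
    unfold rev. rewrite <- Ea. f_equal. apply clampI_of_eq.
    rewrite ival_clampI_id by lra. simpl; lra.
  - intros s. apply sweep_outer; auto; simpl; lra.
Qed.

Definition null_loops_in (y : Z) (U : Z -> Prop) : Prop :=
  forall f, is_loop O f y -> (forall t, U (f t)) -> loop_homotopic O y f (fun _ => y).

Lemma homotopic_in_null_nbhd_src y0 y U al ga : null_loops_in y0 U ->
  is_path O al y0 y -> is_path O ga y0 y -> (forall t, U (al t)) -> (forall t, U (ga t)) ->
  homotopic y0 y al ga.
Proof.
  intros HU Pal Pga Ual Uga. apply homotopic_of_concat_rev_null; auto.
  apply HU.
  - eapply is_path_concat; [exact Pal | apply is_path_rev; exact Pga].
  - intros t. unfold concat, rev. destruct Rle_dec; auto.
Qed.

Lemma homotopic_in_null_nbhd_tgt y0 y U al ga : null_loops_in y0 U ->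
  is_path O al y y0 -> is_path O ga y y0 -> (forall t, U (al t)) -> (forall t, U (ga t)) ->
  homotopic y y0 al ga.
Proof.
  intros HU Pal Pga Ual Uga. apply homotopic_of_rev_concat_null; auto.
  apply HU.
  - eapply is_path_concat; [apply is_path_rev; exact Pal | exact Pga].
  - intros t. unfold concat, rev. destruct Rle_dec; auto.
Qed.

Definition subpath (g : I01 -> Z) (u w : R) (s : I01) : Z := g (clampI (u + ival s * (w - u))).

Lemma is_path_subpath g u w :
  continuous_from_I O g -> is_path O (subpath g u w) (g (clampI u)) (g (clampI w)).
Proof.
  intros C. split; [|split].
  - exact (continuous_I_reparam g _ C (lipschitz2_affine u w)).
  - unfold subpath. rewrite ival_I0. f_equal. apply clampI_eq; ring.
  - unfold subpath. rewrite ival_I1. f_equal. apply clampI_eq; ring.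
Qed.

Lemma concat_subpath g u v : continuous_from_I O g ->
  homotopic (g (clampI 0)) (g (clampI v)) (concat (subpath g 0 u) (subpath g u v)) (subpath g 0 v).
Proof.
  intros C.
  apply (homotopic_ext _ _
    (fun s => g (clampI (u * ival (clampI (2 * ival s)) + (v - u) * ival (clampI (2 * ival s - 1)))))
    (fun s => g (clampI (0 + ival s * (v - 0))))); [| intros; reflexivity |].
  - intros s. unfold concat, subpath. destruct Rle_dec; f_equal; apply clampI_eq.
    + rewrite (ival_clampI_le0 (2 * ival s - 1)) by lra. ring.
    + rewrite (ival_clampI_ge1 (2 * ival s)) by lra. ring.
  - apply homotopic_reparam; auto using lipschitz2_affine.
    + apply lipschitz2_add; apply lipschitz2_scale.
      * apply (lipschitz2_clamp (fun _ s => 2 * ival s)), lipschitz2_scale, lipschitz2_snd.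
      * apply (lipschitz2_clamp (fun _ s => 2 * ival s - 1)), lipschitz2_sub;
          [apply lipschitz2_scale, lipschitz2_snd | apply lipschitz2_const].
    + rewrite ival_I0, ival_clampI_id, ival_clampI_le0; lra.
    + rewrite ival_I1, ival_clampI_ge1, ival_clampI_id; lra.
    + rewrite ival_I0, ival_clampI_id, ival_clampI_le0 by lra. f_equal. apply clampI_eq; ring.
    + rewrite ival_I1, ival_clampI_ge1, ival_clampI_id by lra. f_equal. apply clampI_eq; ring.
Qed.

End Paths.

Lemma concat_comp {W Z} (q : W -> Z) f1 f2 s :
  q (concat f1 f2 s) = concat (fun t => q (f1 t)) (fun t => q (f2 t)) s.
Proof. unfold concat. destruct Rle_dec; auto. Qed.

Lemma subpath_param_near u w t e s : 0 <= u <= 1 -> 0 <= w <= 1 ->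
  Rabs (u - t) < e -> Rabs (w - t) < e -> Rabs (ival (clampI (u + ival s * (w - u))) - t) < e.
Proof.
  intros Hu Hw Hut Hwt. pose proof (ival_bounds s) as Hs.
  assert (Hin : 0 <= u + ival s * (w - u) <= 1).
  { replace (u + ival s * (w - u)) with ((1 - ival s) * u + ival s * w) by ring. split; nra. }
  rewrite ival_clampI_id by exact Hin.
  replace (u + ival s * (w - u) - t) with ((1 - ival s) * (u - t) + ival s * (w - t)) by ring.
  eapply Rle_lt_trans; [apply Rabs_triang|].
  rewrite !Rabs_mult, (Rabs_right (1 - ival s)), (Rabs_right (ival s)) by lra.
  destruct (Rle_dec (Rabs (u - t)) (Rabs (w - t))).
  - pose proof (Rmult_le_compat_l (1 - ival s) _ _ ltac:(lra) r). nra.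
  - pose proof (Rmult_le_compat_l (ival s) (Rabs (w - t)) (Rabs (u - t)) ltac:(lra) ltac:(lra)). nra.
Qed.

(** * The quotient map *)

Section Quotient.
Variables (X : Type) (OX : (X -> Prop) -> Prop) (n : nat) (A : nat -> X -> Prop).
Variables (Y : Type) (OY : (Y -> Prop) -> Prop) (p : X -> Y).
Hypothesis Hquot : is_quotient_by OX OY n A p.

Lemma quotient_open_preimage W : OY W -> OX (fun x => W (p x)).
Proof. destruct Hquot as [_ [_ H]]. apply H. Qed.

Lemma is_path_quotient_comp f x y : is_path OX f x y -> is_path OY (fun t => p (f t)) (p x) (p y).
Proof.
  intros [C [E F]]. split; [|rewrite E, F; auto].
  intros U HU. exact (C _ (quotient_open_preimage U HU)).
Qed.

Lemma ident_rel_of_quotient_eq x y : p x = p y -> ident_rel n A x y.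
Proof. destruct Hquot as [_ [H _]]. apply H. Qed.

Lemma quotient_eq_of_ident_rel x y : ident_rel n A x y -> p x = p y.
Proof. destruct Hquot as [_ [H _]]. apply H. Qed.

Lemma quotient_eq_of_A i x y : A i x -> A i y -> (i < n)%nat -> p x = p y.
Proof. intros Hx Hy Hi. apply quotient_eq_of_ident_rel, rst_step. exists i; auto. Qed.

Lemma ident_rel_eq_or_in_A x y : ident_rel n A x y ->
  x = y \/ ((exists i, (i < n)%nat /\ A i x) /\ (exists j, (j < n)%nat /\ A j y)).
Proof.
  induction 1 as [x y [i [Hi [Hx Hy]]] | x | x y _ IH | x y z _ IH1 _ IH2].
  - right. split; exists i; auto.
  - left; auto.
  - destruct IH as [->|[? ?]]; auto.
  - destruct IH1 as [->|[H1 H2]]; destruct IH2 as [->|[H3 H4]]; auto.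
Qed.

(** [p⁻¹(p(V))] is the union of [V] and of the [A i] whose image meets [p(V)]. *)
Lemma saturation_open V : IsTopology OX -> (forall i, (i < n)%nat -> OX (A i)) ->
  OX V -> OY (fun y => exists v, V v /\ p v = y).
Proof.
  intros [_ [_ Hunion]] HAopen HV. destruct Hquot as [_ [_ HQ]]. apply HQ.
  set (F := fun W : X -> Prop => W = V \/ exists i, (i < n)%nat /\ W = A i /\
              exists z, A i z /\ exists v, V v /\ p v = p z).
  replace (fun x => exists v, V v /\ p v = p x) with (fun x => exists W, F W /\ W x).
  { apply Hunion. intros W [->|[i [Hi [-> _]]]]; auto. }
  apply functional_extensionality; intros x. apply propositional_extensionality. split.
  - intros [W [[->|[i [Hi [-> [z [Hz [v [Hv E]]]]]]]] Hx]].
    + exists x; auto.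
    + exists v. split; auto. rewrite E. apply (quotient_eq_of_A i); auto.
  - intros [v [Hv E]].
    destruct (ident_rel_eq_or_in_A x v (ident_rel_of_quotient_eq x v (eq_sym E)))
      as [->|[[i [Hi Hx]] _]].
    + exists V; split; auto. left; auto.
    + exists (A i). split; auto. right. exists i. repeat split; auto.
      exists x; split; auto. exists v; auto.
Qed.

Lemma closure_specializes i x z : (i < n)%nat -> A i x -> closure OX (A i) z ->
  specializes OY (p z) (p x).
Proof.
  intros Hi Hx Hz W HW Wz. destruct (Hz _ (quotient_open_preimage W HW) Wz) as [w [Ww Aw]].
  rewrite <- (quotient_eq_of_A i w x); auto.
Qed.

Lemma fibre_path x y : (forall i, (i < n)%nat -> path_connected_set OX (closure OX (A i))) ->
  ident_rel n A x y -> exists f, is_path OX f x y /\ forall s, specializes OY (p (f s)) (p x).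
Proof.
  intros HAcl H. apply clos_rst_rst1n in H.
  induction H as [x | x y z Hxy _ [f2 [P2 S2]]].
  - exists (fun _ => x). split; [apply is_path_const|]. intros s W _ Hw; auto.
  - assert (Hi : exists i, (i < n)%nat /\ A i x /\ A i y).
    { destruct Hxy as [[i [? [? ?]]]|[i [? [? ?]]]]; exists i; auto. }
    destruct Hi as [i [Hi [Ax Ay]]].
    assert (Hcl : forall w, A i w -> closure OX (A i) w) by (intros w Hw U _ HU; exists w; auto).
    destruct (HAcl i Hi x y (Hcl x Ax) (Hcl y Ay)) as [h [Ph Ch]].
    exists (concat h f2). split; [eapply is_path_concat; eauto|].
    intros s. unfold concat. destruct Rle_dec.
    + eapply closure_specializes; eauto.
    + rewrite (quotient_eq_of_A i x y); auto.
Qed.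

Lemma fibre_path_null x y : (forall i, (i < n)%nat -> path_connected_set OX (closure OX (A i))) ->
  p x = p y -> exists f, is_path OX f x y /\
    homotopic OY (p x) (p x) (fun t => p (f t)) (fun _ => p x).
Proof.
  intros HAcl E. destruct (fibre_path x y HAcl (ident_rel_of_quotient_eq x y E)) as [f [Pf Sf]].
  exists f. split; auto. destruct (is_path_quotient_comp f x y Pf) as [C [E0 E1]].
  apply homotopic_of_specializes; auto; [apply is_path_const | congruence].
Qed.

End Quotient.

(** * Lifting along the unit interval *)

Lemma unit_interval_induction (Q : R -> Prop) : Q 0 ->
  (forall t, 0 <= t <= 1 -> exists d, d > 0 /\
     (forall u, t - d < u -> u <= t -> 0 <= u -> Q u -> Q t) /\
     (Q t -> forall w, t <= w -> w < t + d -> w <= 1 -> Q w)) -> Q 1.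
Proof.
  intros Q0 Step.
  set (E := fun r => 0 <= r <= 1 /\ forall c, 0 <= c <= r -> Q c).
  assert (E0 : E 0) by (split; [lra | intros c Hc; replace c with 0 by lra; auto]).
  assert (Eb : bound E) by (exists 1; intros r [Hr _]; lra).
  destruct (completeness E Eb (ex_intro _ 0 E0)) as [s [Hub Hlub]].
  assert (s0 : 0 <= s) by (apply Hub; auto).
  assert (s1 : s <= 1) by (apply Hlub; intros r [Hr _]; lra).
  destruct (Step s (conj s0 s1)) as [d [dp [Back Forth]]].
  assert (Hnear : exists r, E r /\ r > s - d).
  { apply NNPP. intro Hn. assert (s <= s - d) by (apply Hlub; intros r Er;
      destruct (Rle_dec r (s - d)); auto; exfalso; apply Hn; exists r; split; auto; lra).
    lra. }
  assert (Hbelow : forall c, 0 <= c < s -> Q c).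
  { intros c Hc. destruct (classic (exists r, E r /\ c <= r)) as [[r [[_ Er] Hr]]|Hn].
    - apply Er; lra.
    - assert (s <= c) by (apply Hlub; intros r Er; destruct (Rle_dec r c); auto;
        exfalso; apply Hn; exists r; split; auto; lra).
      lra. }
  destruct Hnear as [r [[Hr Er] Hrd]].
  assert (rs : r <= s) by (apply Hub; split; auto).
  assert (Qsup : Q s) by (apply (Back r); auto; try lra; apply Er; lra).
  set (w := Rmin 1 (s + d/2)).
  assert (Hw : 0 <= w /\ s <= w <= 1 /\ w <= s + d/2) by (unfold w, Rmin; destruct Rle_dec; lra).
  assert (Ew : E w).
  { split; [lra|]. intros c Hc. destruct (Rtotal_order c s) as [Hl|[He|Hg]].
    - apply Hbelow; lra.
    - subst; auto.
    - apply Forth; auto; lra. }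
  assert (w <= s) by (apply Hub; auto).
  replace 1 with s by (unfold w, Rmin in *; destruct Rle_dec; lra). auto.
Qed.

Section Lifting.
Variables (X : Type) (OX : (X -> Prop) -> Prop) (n : nat) (A : nat -> X -> Prop).
Hypothesis HAcl : forall i, (i < n)%nat -> path_connected_set OX (closure OX (A i)).
Variables (Y : Type) (OY : (Y -> Prop) -> Prop) (p : X -> Y).
Hypothesis Hquot : is_quotient_by OX OY n A p.
Variables (a : X) (g : I01 -> Y).
Hypothesis Cg : continuous_from_I OY g.
Hypothesis Hg0 : g (clampI 0) = p a.

Definition liftable (b : R) : Prop :=
  forall x, p x = g (clampI b) -> exists f, is_path OX f a x /\
    homotopic OY (p a) (g (clampI b)) (fun s => p (f s)) (subpath g 0 b).

Lemma liftable_0 : liftable 0.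
Proof.
  intros x Hx. rewrite Hg0 in Hx.
  destruct (fibre_path_null X OX n A Y OY p Hquot a x HAcl (eq_sym Hx)) as [f [Pf Hf]].
  exists f. split; auto. rewrite Hg0.
  eapply homotopic_ext; [intros; reflexivity | | exact Hf].
  intros s. unfold subpath. rewrite <- Hg0. f_equal. apply clampI_eq; ring.
Qed.

Lemma liftable_extend u w v1 v2 be : liftable u -> is_path OX be v1 v2 ->
  p v1 = g (clampI u) -> p v2 = g (clampI w) ->
  homotopic OY (g (clampI u)) (g (clampI w)) (fun s => p (be s)) (subpath g u w) -> liftable w.
Proof.
  intros Lu Pbe E1 E2 Hbe x Hx.
  destruct (Lu v1 E1) as [f1 [Pf1 Hf1]].
  destruct (fibre_path_null X OX n A Y OY p Hquot v2 x HAcl (eq_trans E2 (eq_sym Hx)))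
    as [ka [Pka Hka]].
  exists (concat f1 (concat be ka)).
  split; [eapply is_path_concat; [|eapply is_path_concat]; eauto|].
  rewrite E2 in Hka.
  assert (Hstep : homotopic OY (g (clampI u)) (g (clampI w))
                    (concat (fun s => p (be s)) (fun s => p (ka s))) (subpath g u w)).
  { eapply homotopic_trans; [exact (homotopic_concat _ _ _ _ _ _ _ _ Hbe Hka)|].
    apply concat_const_r, is_path_subpath; auto. }
  pose proof (concat_subpath OY g u w Cg) as Hsplit. rewrite Hg0 in Hsplit.
  eapply homotopic_ext; [| intros; reflexivity |].
  2: exact (homotopic_trans _ _ _ _ _ _ (homotopic_concat _ _ _ _ _ _ _ _ Hf1 Hstep) Hsplit).
  intros s. rewrite (concat_comp p). f_equal.
  apply functional_extensionality; intros r. symmetry; apply concat_comp.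
Qed.

Section Chart.
Variables (t eps : R) (x0 : X) (U : Y -> Prop) (V : X -> Prop).
Hypothesis Hx0 : p x0 = g (clampI t).
Hypothesis HU : null_loops_in OY (g (clampI t)) U.
Hypothesis HVU : forall x, V x -> U (p x).
Hypothesis HV : path_connected_set OX V.
Hypothesis HVx0 : V x0.
Hypothesis Heps : eps > 0.
Hypothesis HgV : forall s, Rabs (ival s - t) < eps -> exists v, V v /\ p v = g s.

Lemma centre_in_chart : Rabs (t - t) < eps.
Proof. rewrite Rminus_diag, Rabs_R0; auto. Qed.

Lemma subpath_in_chart u w s : 0 <= u <= 1 -> 0 <= w <= 1 ->
  Rabs (u - t) < eps -> Rabs (w - t) < eps -> U (subpath g u w s).
Proof.
  intros Hu Hw Hut Hwt.
  destruct (HgV _ (subpath_param_near u w t eps s Hu Hw Hut Hwt)) as [v [Vv Ev]].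
  unfold subpath. rewrite <- Ev. auto.
Qed.

Lemma lift_in_chart u : 0 <= u <= 1 -> Rabs (u - t) < eps ->
  exists v, V v /\ p v = g (clampI u).
Proof. intros Hu Hut. apply HgV. rewrite ival_clampI_id; auto. Qed.

Lemma liftable_chart_to_centre u : 0 <= u <= 1 -> 0 <= t <= 1 -> Rabs (u - t) < eps ->
  liftable u -> liftable t.
Proof.
  intros Hu Ht Hut Lu.
  destruct (lift_in_chart u Hu Hut) as [v [Vv Ev]].
  destruct (HV v x0 Vv HVx0) as [be [Pbe Vbe]].
  apply (liftable_extend u t v x0 be); auto.
  apply (homotopic_in_null_nbhd_tgt OY _ _ U); auto.
  - rewrite <- Ev, <- Hx0. exact (is_path_quotient_comp X OX n A Y OY p Hquot _ _ _ Pbe).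
  - apply is_path_subpath; auto.
  - intros s; apply subpath_in_chart; auto using centre_in_chart.
Qed.

Lemma liftable_centre_to_chart w : 0 <= w <= 1 -> 0 <= t <= 1 -> Rabs (w - t) < eps ->
  liftable t -> liftable w.
Proof.
  intros Hw Ht Hwt Lt.
  destruct (lift_in_chart w Hw Hwt) as [v [Vv Ev]].
  destruct (HV x0 v HVx0 Vv) as [be [Pbe Vbe]].
  apply (liftable_extend t w x0 v be); auto.
  apply (homotopic_in_null_nbhd_src OY _ _ U); auto.
  - rewrite <- Ev, <- Hx0. exact (is_path_quotient_comp X OX n A Y OY p Hquot _ _ _ Pbe).
  - apply is_path_subpath; auto.
  - intros s; apply subpath_in_chart; auto using centre_in_chart.
Qed.

End Chart.

Lemma liftable_locally t : IsTopology OX -> locally_path_connected OX ->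
  (forall i, (i < n)%nat -> OX (A i)) -> semi_locally_simply_connected OY ->
  0 <= t <= 1 -> exists d, d > 0 /\
    (forall u, t - d < u -> u <= t -> 0 <= u -> liftable u -> liftable t) /\
    (liftable t -> forall w, t <= w -> w < t + d -> w <= 1 -> liftable w).
Proof.
  intros HX Hlpc HAopen Hslsc Ht.
  destruct (proj1 Hquot (g (clampI t))) as [x0 Hx0].
  destruct (Hslsc (g (clampI t))) as [U [OU [Ut HU]]].
  destruct (Hlpc x0 (fun x => U (p x)) (quotient_open_preimage X OX n A Y OY p Hquot U OU))
    as [V [OV [Vx0 [HVU HV]]]]; [rewrite Hx0; auto|].
  destruct (Cg _ (saturation_open X OX n A Y OY p Hquot V HX HAopen OV) (clampI t))
    as [eps [Heps HgV]]; [exists x0; auto|].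
  rewrite (ival_clampI_id t Ht) in HgV.
  exists eps. split; auto. split.
  - intros u Hu1 Hu2 Hu0 Lu.
    apply (liftable_chart_to_centre t eps x0 U V) with u; auto; [lra | apply Rabs_def1; lra].
  - intros Lt w Hw1 Hw2 Hw3.
    apply (liftable_centre_to_chart t eps x0 U V); auto; [lra | apply Rabs_def1; lra].
Qed.

End Lifting.

Theorem corollary3p6
  (X : Type) (OX : (X -> Prop) -> Prop) (HX : IsTopology OX)
  (Hconn : connected_space OX) (Hlpc : locally_path_connected OX)
  (n : nat) (A : nat -> X -> Prop)
  (HAopen : forall i, (i < n)%nat -> OX (A i))
  (HAcl : forall i, (i < n)%nat -> path_connected_set OX (closure OX (A i)))
  (Y : Type) (OY : (Y -> Prop) -> Prop) (p : X -> Y)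
  (Hquot : is_quotient_by OX OY n A p)
  (Hslsc : semi_locally_simply_connected OY)
  (a : X) (Ha : exists i, (i < n)%nat /\ A i a) :
  forall g : I01 -> Y, is_loop OY g (p a) ->
    exists f : I01 -> X, is_loop OX f a /\
      loop_homotopic OY (p a) (fun t => p (f t)) g.
Proof.
  intros g [Cg [G0 G1]].
  assert (Hg0 : g (clampI 0) = p a) by (rewrite clampI0; auto).
  assert (L1 : liftable X OX Y OY p a g 1).
  { apply unit_interval_induction.
    - apply (liftable_0 X OX n A); auto.
    - intros t Ht. apply (liftable_locally X OX n A); auto. }
  destruct (L1 a) as [f [Pf Hf]]; [rewrite clampI1; auto|].
  exists f. split; auto.
  rewrite clampI1, G1 in Hf.
  eapply homotopic_ext; [intros; reflexivity | | exact Hf].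
  intros s. unfold subpath. f_equal. apply clampI_of_eq. ring.
Qed.
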